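(* Let $S=\{(e^{it},0)\in\mathbb{C}^2:t\in\mathbb{R}\}$ and let $U=\{z\in\mathbb{C}^2:\operatorname{dist}(z,S)<1/10\}$ be its open $1/10$-tubular neighborhood, and let $p=(9/10,0)\in\partial U$. Then there is no holomorphic automorphism $\psi\in\operatorname{Aut}(\mathbb{C}^2)$ such that $\psi(p)$ is a spherically-extreme boundary point of $\psi(U)$.
   Context: A boundary point $p\in\partial\Omega$ of a domain $\Omega\subset\mathbb{C}^n$ is called spherically-extreme if (1) $\partial\Omega$ is $\mathcal{C}^2$-smooth in an open neighborhood of $p$, and (2) there is a Euclidean ball $\mathbb{B}^n(c;R)=\{z:\|z-c\|<R\}$ with $\Omega\subset\mathbb{B}^n(c;R)$ and $p\in\partial\Omega\cap\partial\mathbb{B}^n(c;R)$. $\operatorname{Aut}(\mathbb{C}^2)$ denotes the group of biholomorphic self-maps of $\mathbb{C}^2$. *)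

From Stdlib Require Import Reals Lra Lia.
Open Scope R_scope.

(* A point (z1, z2) of C^2 with z1 = a1 + i b1, z2 = a2 + i b2. *)
Record C2 := mkC2 { a1 : R; b1 : R; a2 : R; b2 : R }.

Definition addC2 (z w : C2) : C2 :=
  mkC2 (a1 z + a1 w) (b1 z + b1 w) (a2 z + a2 w) (b2 z + b2 w).
Definition subC2 (z w : C2) : C2 :=
  mkC2 (a1 z - a1 w) (b1 z - b1 w) (a2 z - a2 w) (b2 z - b2 w).
Definition scaleC2 (r : R) (z : C2) : C2 :=
  mkC2 (r * a1 z) (r * b1 z) (r * a2 z) (r * b2 z).
Definition mulI (z : C2) : C2 := mkC2 (- b1 z) (a1 z) (- b2 z) (a2 z).

Definition normC2 (z : C2) : R :=
  sqrt (a1 z ^ 2 + b1 z ^ 2 + a2 z ^ 2 + b2 z ^ 2).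
Definition distC2 (z w : C2) : R := normC2 (subC2 z w).

Definition basis (k : nat) : C2 :=
  match k with
  | 0%nat => mkC2 1 0 0 0
  | 1%nat => mkC2 0 1 0 0
  | 2%nat => mkC2 0 0 1 0
  | 3%nat => mkC2 0 0 0 1
  | _ => mkC2 0 0 0 0
  end.

Definition C_linear (L : C2 -> C2) : Prop :=
  (forall x y, L (addC2 x y) = addC2 (L x) (L y)) /\
  (forall r x, L (scaleC2 r x) = scaleC2 r (L x)) /\
  (forall x, L (mulI x) = mulI (L x)).

Definition frechet_at (F : C2 -> C2) (z : C2) (L : C2 -> C2) : Prop :=
  forall eps, 0 < eps -> exists delta, 0 < delta /\
    forall h, 0 < normC2 h < delta ->
      normC2 (subC2 (subC2 (F (addC2 z h)) (F z)) (L h)) <= eps * normC2 h.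

Definition holomorphic (F : C2 -> C2) : Prop :=
  forall z, exists L, C_linear L /\ frechet_at F z L.

Definition is_aut (psi : C2 -> C2) : Prop :=
  holomorphic psi /\
  exists phi, holomorphic phi /\ (forall z, phi (psi z) = z) /\
              (forall w, psi (phi w) = w).

Definition open_set (A : C2 -> Prop) : Prop :=
  forall z, A z -> exists r, 0 < r /\ forall w, distC2 w z < r -> A w.
Definition in_closure (A : C2 -> Prop) (z : C2) : Prop :=
  forall r, 0 < r -> exists w, A w /\ distC2 w z < r.
Definition in_interior (A : C2 -> Prop) (z : C2) : Prop :=
  exists r, 0 < r /\ forall w, distC2 w z < r -> A w.
Definition in_boundary (A : C2 -> Prop) (z : C2) : Prop :=
  in_closure A z /\ ~ in_interior A z.

Definition image (psi : C2 -> C2) (A : C2 -> Prop) : C2 -> Prop :=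
  fun w => exists z, A z /\ psi z = w.

Definition continuous_on (f : C2 -> R) (V : C2 -> Prop) : Prop :=
  forall z, V z -> forall eps, 0 < eps -> exists delta, 0 < delta /\
    forall w, distC2 w z < delta -> Rabs (f w - f z) < eps.

Definition C2_on (rho : C2 -> R) (d1 : nat -> C2 -> R)
    (d2 : nat -> nat -> C2 -> R) (V : C2 -> Prop) : Prop :=
  (forall k z, (k < 4)%nat -> V z ->
     derivable_pt_lim (fun t => rho (addC2 z (scaleC2 t (basis k)))) 0 (d1 k z)) /\
  (forall k j z, (k < 4)%nat -> (j < 4)%nat -> V z ->
     derivable_pt_lim (fun t => d1 k (addC2 z (scaleC2 t (basis j)))) 0 (d2 k j z)) /\
  continuous_on rho V /\
  (forall k, (k < 4)%nat -> continuous_on (d1 k) V) /\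
  (forall k j, (k < 4)%nat -> (j < 4)%nat -> continuous_on (d2 k j) V).

Definition C2_smooth_boundary_near (Omega : C2 -> Prop) (p : C2) : Prop :=
  exists (V : C2 -> Prop) rho d1 d2,
    open_set V /\ V p /\ C2_on rho d1 d2 V /\
    (forall z, V z -> exists k, (k < 4)%nat /\ d1 k z <> 0) /\
    (forall z, V z -> (Omega z <-> rho z < 0)).

Definition spherically_extreme (Omega : C2 -> Prop) (p : C2) : Prop :=
  in_boundary Omega p /\
  C2_smooth_boundary_near Omega p /\
  exists (c : C2) (Rad : R), 0 < Rad /\
    (forall z, Omega z -> distC2 z c < Rad) /\
    distC2 p c = Rad.

Definition circleS (s : C2) : Prop := exists t : R, s = mkC2 (cos t) (sin t) 0 0.
(* U = {z : dist(z,S) < 1/10}; dist(z,S) < 1/10 iff some s in S has |z-s| < 1/10 *)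
Definition tubeU (z : C2) : Prop := exists s, circleS s /\ distC2 z s < 1/10.
Definition pointP : C2 := mkC2 (9/10) 0 0 0.

From Stdlib Require Import Reals.
Open Scope R_scope.
From Stdlib Require Import Lra ClassicalEpsilon.
From Coquelicot Require Import Coquelicot.
From mathcomp Require all_boot all_order all_algebra all_classical all_reals all_analysis.
From mathcomp Require Rstruct Rstruct_topology.

(* For a holomorphic
   map psi of C^2, a centre c and a radius Rad, suppose psi maps the circle
   S = {(e^{it},0)} into the open ball B(c,Rad).  Then psi maps the whole
   closed disc {(z,0) : |z| <= 1} into B(c,Rad): otherwise pick z with
   a := psi(z,0) - c of norm >= Rad and consider the entire function
   F(w) := <psi(w,0) - c, a> (Hermitian product).  Cauchy-Schwarz gives
   Re F < |a|^2 on the unit circle while Re F(z) = |a|^2, contradicting the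
   maximum principle for Re F on the closed unit disc.  Since S lies in the
   tube U and p = (9/10,0) lies in the disc, psi(p) is in the open ball and
   so cannot lie on its boundary sphere. *)

Lemma Cmod_le_abs (u v : R) : Cmod (u, v) <= Rabs u + Rabs v.
Proof.
  pose proof (Rabs_pos u); pose proof (Rabs_pos v).
  rewrite <- (sqrt_square (Rabs u + Rabs v)) by lra.
  apply sqrt_le_1_alt; simpl.
  assert (u * u = Rabs u * Rabs u) by (rewrite <- Rabs_mult; rewrite Rabs_right; nra).
  assert (v * v = Rabs v * Rabs v) by (rewrite <- Rabs_mult; rewrite Rabs_right; nra).
  nra.
Qed.

Lemma Rabs_fst_le_Cmod (z : C) : Rabs (fst z) <= Cmod z.
Proof. pose proof (Rmax_Cmod z). pose proof (Rmax_l (Rabs (fst z)) (Rabs (snd z))). lra. Qed.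

Lemma Rabs_snd_le_Cmod (z : C) : Rabs (snd z) <= Cmod z.
Proof. pose proof (Rmax_Cmod z). pose proof (Rmax_r (Rabs (fst z)) (Rabs (snd z))). lra. Qed.

Lemma Cmod_sqr (z : C) : Cmod z * Cmod z = fst z * fst z + snd z * snd z.
Proof. destruct z as [u v]; unfold Cmod; simpl. rewrite sqrt_sqrt; nra. Qed.

Definition Rcontinuous (g : R -> R) : Prop :=
  forall x eps, 0 < eps -> exists del, 0 < del /\
    forall x', Rabs (x' - x) < del -> Rabs (g x' - g x) < eps.

Definition Ccontinuous (G : C -> C) : Prop :=
  forall z eps, 0 < eps -> exists del, 0 < del /\
    forall z', Cmod (z' - z)%C < del -> Cmod (G z' - G z)%C < eps.

Lemma Rcontinuous_pt (g : R -> R) (x : R) : Rcontinuous g -> continuity_pt g x.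
Proof.
  intros Hg eps Heps. destruct (Hg x eps Heps) as [d [Hd H]].
  exists d; split; auto. intros x' [_ Hx']. exact (H x' Hx').
Qed.

Lemma Rcontinuous_ex_RInt (g : R -> R) (a b : R) : Rcontinuous g -> ex_RInt g a b.
Proof.
  intros Hg. apply (@ex_RInt_continuous R_CompleteNormedModule).
  intros z _. apply continuity_pt_filterlim, Rcontinuous_pt, Hg.
Qed.

Lemma Rcontinuous_minus (f g : R -> R) :
  Rcontinuous f -> Rcontinuous g -> Rcontinuous (fun x => f x - g x).
Proof.
  intros Hf Hg x eps He.
  destruct (Hf x (eps/2)) as [d1 [Hd1 H1]]; [lra|].
  destruct (Hg x (eps/2)) as [d2 [Hd2 H2]]; [lra|].
  exists (Rmin d1 d2); split; [apply Rmin_glb_lt; lra|].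
  intros x' Hx'. pose proof (Rmin_l d1 d2); pose proof (Rmin_r d1 d2).
  specialize (H1 x' ltac:(lra)); specialize (H2 x' ltac:(lra)).
  replace (f x' - g x' - (f x - g x)) with ((f x' - f x) - (g x' - g x)) by ring.
  eapply Rle_lt_trans; [apply Rabs_triang|]. rewrite Rabs_Ropp. lra.
Qed.

Lemma Rcontinuous_along (G : C -> C) (pr : C -> R) (phi : R -> C) (L : R) :
  Ccontinuous G -> (forall u v, Rabs (pr u - pr v) <= Cmod (u - v)%C) ->
  0 <= L -> (forall t t', Cmod (phi t' - phi t)%C <= L * Rabs (t' - t)) ->
  Rcontinuous (fun t => pr (G (phi t))).
Proof.
  intros HG Hpr HL Hphi t eps He. destruct (HG (phi t) eps He) as [d [Hd H]].
  exists (d / (L + 1)). split; [apply Rdiv_lt_0_compat; lra|].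
  intros t' Ht'. eapply Rle_lt_trans; [apply Hpr|]. apply H.
  eapply Rle_lt_trans; [apply Hphi|].
  pose proof (Rabs_pos (t' - t)).
  apply Rle_lt_trans with ((L + 1) * Rabs (t' - t)); [nra|].
  apply (Rmult_lt_compat_l (L + 1)) in Ht'; [|lra].
  replace ((L + 1) * (d / (L + 1))) with d in Ht' by (field; lra). lra.
Qed.

Lemma fst_lipschitz (u v : C) : Rabs (fst u - fst v) <= Cmod (u - v)%C.
Proof. apply (Rabs_fst_le_Cmod (u - v)%C). Qed.

Lemma snd_lipschitz (u v : C) : Rabs (snd u - snd v) <= Cmod (u - v)%C.
Proof. apply (Rabs_snd_le_Cmod (u - v)%C). Qed.

Definition C_derivable_at (f : C -> C) (w c : C) : Prop :=
  forall eps, 0 < eps -> exists del, 0 < del /\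
    forall h, Cmod h < del -> Cmod (f (w + h) - f w - c * h)%C <= eps * Cmod h.

Definition entire (f : C -> C) : Prop := forall w, exists c, C_derivable_at f w c.

Lemma entire_continuous (G : C -> C) : entire G -> Ccontinuous G.
Proof.
  intros HG z eps He. destruct (HG z) as [c Hc].
  destruct (Hc 1 Rlt_0_1) as [d [Hd H]].
  pose proof (Cmod_ge_0 c).
  exists (Rmin d (eps / (Cmod c + 2))). split.
  { apply Rmin_glb_lt; auto. apply Rdiv_lt_0_compat; lra. }
  intros z' Hz'.
  pose proof (Rmin_l d (eps / (Cmod c + 2))); pose proof (Rmin_r d (eps / (Cmod c + 2))).
  specialize (H (z' - z)%C ltac:(lra)).
  replace (z + (z' - z))%C with z' in H by (apply injective_projections; simpl; ring).
  replace (G z' - G z)%C with ((G z' - G z - c * (z' - z)) + c * (z' - z))%C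
    by (apply injective_projections; simpl; ring).
  eapply Rle_lt_trans; [apply Cmod_triangle|]. rewrite Cmod_mult.
  pose proof (Cmod_ge_0 (z' - z)%C).
  assert (Cmod (z' - z)%C * (Cmod c + 2) < eps).
  { assert (Hlt : Cmod (z' - z)%C < eps / (Cmod c + 2)) by lra.
    apply (Rmult_lt_compat_r (Cmod c + 2)) in Hlt; [|lra].
    replace (eps / (Cmod c + 2) * (Cmod c + 2)) with eps in Hlt by (field; lra). lra. }
  nra.
Qed.

Lemma RInt_approx (f : R -> R) (a b k M : R) :
  a <= b -> ex_RInt f a b -> (forall x, a <= x <= b -> Rabs (f x - k) <= M) ->
  Rabs (RInt f a b - (b - a) * k) <= (b - a) * M.
Proof.
  intros Hab Hex Hb.
  assert (H1 : RInt f a b <= RInt (fun _ => k + M) a b).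
  { apply RInt_le; auto. apply ex_RInt_const. intros x Hx.
    specialize (Hb x ltac:(lra)). apply Rabs_le_between in Hb. lra. }
  assert (H2 : RInt (fun _ => k - M) a b <= RInt f a b).
  { apply RInt_le; auto. apply ex_RInt_const. intros x Hx.
    specialize (Hb x ltac:(lra)). apply Rabs_le_between in Hb. lra. }
  rewrite !RInt_const in H1, H2. unfold scal in H1, H2; simpl in H1, H2.
  unfold mult in H1, H2; simpl in H1, H2.
  apply Rabs_le_between. nra.
Qed.

Lemma RInt_plusR (f g : R -> R) (a b : R) : ex_RInt f a b -> ex_RInt g a b ->
  RInt (fun x => f x + g x) a b = RInt f a b + RInt g a b.
Proof. intros. rewrite <- (RInt_plus (V := R_CompleteNormedModule)); auto. Qed.

Lemma RInt_minusR (f g : R -> R) (a b : R) : ex_RInt f a b -> ex_RInt g a b ->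
  RInt (fun x => f x - g x) a b = RInt f a b - RInt g a b.
Proof. intros. rewrite <- (RInt_minus (V := R_CompleteNormedModule)); auto. Qed.

Lemma RInt_scalR (f : R -> R) (a b c : R) : ex_RInt f a b ->
  RInt (fun x => c * f x) a b = c * RInt f a b.
Proof. intros. rewrite <- (RInt_scal (V := R_CompleteNormedModule)); auto. Qed.

Lemma RInt_constR (a b k : R) : RInt (fun _ => k) a b = (b - a) * k.
Proof. rewrite RInt_const. reflexivity. Qed.

Lemma RInt_telescope (A B C : R -> R) (a b : R) :
  ex_RInt (fun y => A y - B y) a b -> ex_RInt (fun y => B y - C y) a b ->
  RInt (fun y => A y - C y) a b = RInt (fun y => A y - B y) a b + RInt (fun y => B y - C y) a b.
Proof.
  intros H1 H2. rewrite <- RInt_plusR by auto. apply RInt_ext. intros x _. simpl. ring.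
Qed.

Lemma Rabs_diff_le (a b e : R) : Rabs a <= e -> Rabs b <= e -> Rabs (a - b) <= 2 * e.
Proof. intros. eapply Rle_trans; [apply Rabs_triang|]. rewrite Rabs_Ropp. lra. Qed.

Lemma Cmod_horizontal (x x' y : R) : Cmod ((x', y) - (x, y))%C <= 1 * Rabs (x' - x).
Proof.
  eapply Rle_trans; [apply Cmod_le_abs|]. simpl.
  replace (y + - y) with 0 by ring. rewrite Rabs_R0. unfold Rminus. lra.
Qed.

Lemma Cmod_vertical (x y y' : R) : Cmod ((x, y') - (x, y))%C <= 1 * Rabs (y' - y).
Proof.
  eapply Rle_trans; [apply Cmod_le_abs|]. simpl.
  replace (x + - x) with 0 by ring. rewrite Rabs_R0. unfold Rminus. lra.
Qed.

Record rect := mkRect { rx0 : R; rx1 : R; ry0 : R; ry1 : R }.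

(* Writing G = P + iQ, the real and
   imaginary parts of the contour integral are [contour_re] and [contour_im].
   Proof by bisection: some quarter carries a quarter of the size, the
   nested quarters shrink to a point where G is differentiable, and there
   the contour integral of the affine approximation vanishes. *)
Section Goursat.
Variable G : C -> C.
Hypothesis HG : entire G.

Let P (x y : R) : R := fst (G (x, y)).
Let Q (x y : R) : R := snd (G (x, y)).

Let Gcont : Ccontinuous G := entire_continuous G HG.

Let P_along_x (y : R) : Rcontinuous (fun x => P x y) :=
  Rcontinuous_along G fst (fun x => (x, y)) 1 Gcont fst_lipschitz Rle_0_1
    (fun x x' => Cmod_horizontal x x' y).
Let Q_along_x (y : R) : Rcontinuous (fun x => Q x y) :=
  Rcontinuous_along G snd (fun x => (x, y)) 1 Gcont snd_lipschitz Rle_0_1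
    (fun x x' => Cmod_horizontal x x' y).
Let P_along_y (x : R) : Rcontinuous (fun y => P x y) :=
  Rcontinuous_along G fst (fun y => (x, y)) 1 Gcont fst_lipschitz Rle_0_1
    (fun y y' => Cmod_vertical x y y').
Let Q_along_y (x : R) : Rcontinuous (fun y => Q x y) :=
  Rcontinuous_along G snd (fun y => (x, y)) 1 Gcont snd_lipschitz Rle_0_1
    (fun y y' => Cmod_vertical x y y').

Let exPx (y0 y1 a b : R) : ex_RInt (fun x => P x y0 - P x y1) a b.
Proof. apply Rcontinuous_ex_RInt, Rcontinuous_minus; apply P_along_x. Qed.
Let exQx (y0 y1 a b : R) : ex_RInt (fun x => Q x y0 - Q x y1) a b.
Proof. apply Rcontinuous_ex_RInt, Rcontinuous_minus; apply Q_along_x. Qed.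
Let exPy (x0 x1 a b : R) : ex_RInt (fun y => P x0 y - P x1 y) a b.
Proof. apply Rcontinuous_ex_RInt, Rcontinuous_minus; apply P_along_y. Qed.
Let exQy (x0 x1 a b : R) : ex_RInt (fun y => Q x0 y - Q x1 y) a b.
Proof. apply Rcontinuous_ex_RInt, Rcontinuous_minus; apply Q_along_y. Qed.

(* The boundary is run counterclockwise; with dz = dx + i dy, the real part
   of the contour integral is the integral of P dx - Q dy and the imaginary
   part that of Q dx + P dy. *)
Definition contour_re (r : rect) : R :=
  RInt (fun x => P x (ry0 r) - P x (ry1 r)) (rx0 r) (rx1 r) +
  RInt (fun y => Q (rx0 r) y - Q (rx1 r) y) (ry0 r) (ry1 r).
Definition contour_im (r : rect) : R :=
  RInt (fun x => Q x (ry0 r) - Q x (ry1 r)) (rx0 r) (rx1 r) +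
  RInt (fun y => P (rx1 r) y - P (rx0 r) y) (ry0 r) (ry1 r).
Definition contour_size (r : rect) : R := Rabs (contour_re r) + Rabs (contour_im r).

Lemma contour_size_ge0 (r : rect) : 0 <= contour_size r.
Proof. unfold contour_size. pose proof (Rabs_pos (contour_re r)); pose proof (Rabs_pos (contour_im r)); lra. Qed.

Lemma contour_split_x (x0 xm x1 y0 y1 : R) :
  contour_re (mkRect x0 x1 y0 y1) = contour_re (mkRect x0 xm y0 y1) + contour_re (mkRect xm x1 y0 y1) /\
  contour_im (mkRect x0 x1 y0 y1) = contour_im (mkRect x0 xm y0 y1) + contour_im (mkRect xm x1 y0 y1).
Proof.
  unfold contour_re, contour_im; simpl.
  rewrite <- !(RInt_Chasles _ x0 xm x1) by auto.
  rewrite (RInt_telescope (fun y => Q x0 y) (fun y => Q xm y) (fun y => Q x1 y)) by auto.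
  rewrite (RInt_telescope (fun y => P x1 y) (fun y => P xm y) (fun y => P x0 y)) by auto.
  split; unfold plus; simpl; ring.
Qed.

Lemma contour_split_y (x0 x1 y0 ym y1 : R) :
  contour_re (mkRect x0 x1 y0 y1) = contour_re (mkRect x0 x1 y0 ym) + contour_re (mkRect x0 x1 ym y1) /\
  contour_im (mkRect x0 x1 y0 y1) = contour_im (mkRect x0 x1 y0 ym) + contour_im (mkRect x0 x1 ym y1).
Proof.
  unfold contour_re, contour_im; simpl.
  rewrite <- !(RInt_Chasles _ y0 ym y1) by auto.
  rewrite (RInt_telescope (fun x => P x y0) (fun x => P x ym) (fun x => P x y1)) by auto.
  rewrite (RInt_telescope (fun x => Q x y0) (fun x => Q x ym) (fun x => Q x y1)) by auto.
  split; unfold plus; simpl; ring.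
Qed.

Definition quarter (r : rect) (i j : bool) : rect :=
  let xm := (rx0 r + rx1 r) / 2 in let ym := (ry0 r + ry1 r) / 2 in
  mkRect (if i then xm else rx0 r) (if i then rx1 r else xm)
         (if j then ym else ry0 r) (if j then ry1 r else ym).

Lemma big_quarter_exists (r : rect) :
  exists i j, contour_size (quarter r i j) >= contour_size r / 4.
Proof.
  destruct r as [x0 x1 y0 y1]. unfold contour_size, quarter; simpl.
  set (xm := (x0 + x1) / 2). set (ym := (y0 + y1) / 2).
  destruct (contour_split_x x0 xm x1 y0 y1) as [-> ->].
  destruct (contour_split_y x0 xm y0 ym y1) as [-> ->].
  destruct (contour_split_y xm x1 y0 ym y1) as [-> ->].
  set (a1 := contour_re (mkRect x0 xm y0 ym)). set (a2 := contour_re (mkRect x0 xm ym y1)).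
  set (a3 := contour_re (mkRect xm x1 y0 ym)). set (a4 := contour_re (mkRect xm x1 ym y1)).
  set (b1 := contour_im (mkRect x0 xm y0 ym)). set (b2 := contour_im (mkRect x0 xm ym y1)).
  set (b3 := contour_im (mkRect xm x1 y0 ym)). set (b4 := contour_im (mkRect xm x1 ym y1)).
  assert (Htot : Rabs (a1 + a2 + (a3 + a4)) + Rabs (b1 + b2 + (b3 + b4)) <=
    (Rabs a1 + Rabs b1) + (Rabs a2 + Rabs b2) + (Rabs a3 + Rabs b3) + (Rabs a4 + Rabs b4)).
  { pose proof (Rabs_triang (a1 + a2) (a3 + a4)). pose proof (Rabs_triang a1 a2).
    pose proof (Rabs_triang a3 a4). pose proof (Rabs_triang (b1 + b2) (b3 + b4)).
    pose proof (Rabs_triang b1 b2). pose proof (Rabs_triang b3 b4). lra. }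
  set (T := Rabs (a1 + a2 + (a3 + a4)) + Rabs (b1 + b2 + (b3 + b4))) in *.
  destruct (Rle_or_lt T (4 * (Rabs a1 + Rabs b1))).
  { exists false, false. simpl. fold a1 b1. lra. }
  destruct (Rle_or_lt T (4 * (Rabs a2 + Rabs b2))).
  { exists false, true. simpl. fold a2 b2. lra. }
  destruct (Rle_or_lt T (4 * (Rabs a3 + Rabs b3))).
  { exists true, false. simpl. fold a3 b3. lra. }
  exists true, true. simpl. fold a4 b4. lra.
Qed.

(* If P and Q are within e of an affine map on a rectangle (with the
   Cauchy-Riemann structure of z |-> g + c (z - ws)), then both parts of the
   contour integral are at most 2 e times the semi-perimeter, because the
   affine map itself has zero contour integral. *)
Section Affine_estimate.
Variables (x0 x1 y0 y1 xs ys c1 c2 g1 g2 e : R).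
Hypotheses (Hx : x0 <= x1) (Hy : y0 <= y1).
Hypothesis HP : forall x y, x0 <= x <= x1 -> y0 <= y <= y1 ->
  Rabs (P x y - (g1 + c1 * (x - xs) - c2 * (y - ys))) <= e.
Hypothesis HQ : forall x y, x0 <= x <= x1 -> y0 <= y <= y1 ->
  Rabs (Q x y - (g2 + c1 * (y - ys) + c2 * (x - xs))) <= e.

Lemma contour_re_affine_bound :
  Rabs (contour_re (mkRect x0 x1 y0 y1)) <= 2 * e * ((x1 - x0) + (y1 - y0)).
Proof.
  unfold contour_re; simpl.
  assert (B1 := RInt_approx (fun x => P x y0 - P x y1) x0 x1 (c2 * (y1 - y0)) (2 * e) Hx
                 (exPx _ _ _ _)).
  assert (B2 := RInt_approx (fun y => Q x0 y - Q x1 y) y0 y1 (c2 * (x0 - x1)) (2 * e) Hy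
                 (exQy _ _ _ _)).
  lapply B1; [clear B1; intros B1|].
  2:{ intros x Hx'. replace (P x y0 - P x y1 - c2 * (y1 - y0)) with
        ((P x y0 - (g1 + c1 * (x - xs) - c2 * (y0 - ys))) -
         (P x y1 - (g1 + c1 * (x - xs) - c2 * (y1 - ys)))) by ring.
      apply Rabs_diff_le; apply HP; lra. }
  lapply B2; [clear B2; intros B2|].
  2:{ intros y Hy'. replace (Q x0 y - Q x1 y - c2 * (x0 - x1)) with
        ((Q x0 y - (g2 + c1 * (y - ys) + c2 * (x0 - xs))) -
         (Q x1 y - (g2 + c1 * (y - ys) + c2 * (x1 - xs)))) by ring.
      apply Rabs_diff_le; apply HQ; lra. }
  set (J1 := RInt _ x0 x1) in *. set (J2 := RInt _ y0 y1) in *.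
  replace (J1 + J2) with ((J1 - (x1 - x0) * (c2 * (y1 - y0))) +
                          (J2 - (y1 - y0) * (c2 * (x0 - x1)))) by ring.
  eapply Rle_trans; [apply Rabs_triang|]. lra.
Qed.

Lemma contour_im_affine_bound :
  Rabs (contour_im (mkRect x0 x1 y0 y1)) <= 2 * e * ((x1 - x0) + (y1 - y0)).
Proof.
  unfold contour_im; simpl.
  assert (B1 := RInt_approx (fun x => Q x y0 - Q x y1) x0 x1 (c1 * (y0 - y1)) (2 * e) Hx
                 (exQx _ _ _ _)).
  assert (B2 := RInt_approx (fun y => P x1 y - P x0 y) y0 y1 (c1 * (x1 - x0)) (2 * e) Hy
                 (exPy _ _ _ _)).
  lapply B1; [clear B1; intros B1|].
  2:{ intros x Hx'. replace (Q x y0 - Q x y1 - c1 * (y0 - y1)) with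
        ((Q x y0 - (g2 + c1 * (y0 - ys) + c2 * (x - xs))) -
         (Q x y1 - (g2 + c1 * (y1 - ys) + c2 * (x - xs)))) by ring.
      apply Rabs_diff_le; apply HQ; lra. }
  lapply B2; [clear B2; intros B2|].
  2:{ intros y Hy'. replace (P x1 y - P x0 y - c1 * (x1 - x0)) with
        ((P x1 y - (g1 + c1 * (x1 - xs) - c2 * (y - ys))) -
         (P x0 y - (g1 + c1 * (x0 - xs) - c2 * (y - ys)))) by ring.
      apply Rabs_diff_le; apply HP; lra. }
  set (J1 := RInt _ x0 x1) in *. set (J2 := RInt _ y0 y1) in *.
  replace (J1 + J2) with ((J1 - (x1 - x0) * (c1 * (y0 - y1))) +
                          (J2 - (y1 - y0) * (c1 * (x1 - x0)))) by ring.
  eapply Rle_trans; [apply Rabs_triang|]. lra.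
Qed.

End Affine_estimate.

Definition semi_perimeter (r : rect) : R := (rx1 r - rx0 r) + (ry1 r - ry0 r).

Lemma contour_size_local (r : rect) (ws c : C) (eps del : R) :
  0 <= eps ->
  (forall h, Cmod h < del -> Cmod (G (ws + h) - G ws - c * h)%C <= eps * Cmod h) ->
  rx0 r <= fst ws <= rx1 r -> ry0 r <= snd ws <= ry1 r -> semi_perimeter r < del ->
  contour_size r <= 4 * eps * semi_perimeter r ^ 2.
Proof.
  destruct r as [x0 x1 y0 y1]; destruct ws as [xs ys]; destruct c as [c1 c2].
  unfold semi_perimeter; simpl. intros He Hd Hx Hy HD.
  set (D := (x1 - x0) + (y1 - y0)) in *.
  assert (Happrox : forall x y, x0 <= x <= x1 -> y0 <= y <= y1 ->
    Cmod (G (x, y) - G (xs, ys) - (c1, c2) * ((x, y) - (xs, ys)))%C <= eps * D).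
  { intros x y Hx' Hy'.
    assert (Hh : Cmod ((x, y) - (xs, ys))%C <= D).
    { eapply Rle_trans; [apply Cmod_le_abs|]. simpl. unfold D.
      apply Rplus_le_compat; apply Rabs_le; lra. }
    specialize (Hd ((x, y) - (xs, ys))%C ltac:(lra)).
    replace ((xs, ys) + ((x, y) - (xs, ys)))%C with (x, y) in Hd
      by (apply injective_projections; simpl; ring).
    eapply Rle_trans; [exact Hd|]. apply Rmult_le_compat_l; auto. }
  assert (HP : forall x y, x0 <= x <= x1 -> y0 <= y <= y1 ->
    Rabs (P x y - (fst (G (xs, ys)) + c1 * (x - xs) - c2 * (y - ys))) <= eps * D).
  { intros x y Hx' Hy'. eapply Rle_trans; [|apply (Happrox x y Hx' Hy')].
    eapply Rle_trans; [|apply Rabs_fst_le_Cmod]. right. f_equal. unfold P. simpl. ring. }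
  assert (HQ : forall x y, x0 <= x <= x1 -> y0 <= y <= y1 ->
    Rabs (Q x y - (snd (G (xs, ys)) + c1 * (y - ys) + c2 * (x - xs))) <= eps * D).
  { intros x y Hx' Hy'. eapply Rle_trans; [|apply (Happrox x y Hx' Hy')].
    eapply Rle_trans; [|apply Rabs_snd_le_Cmod]. right. f_equal. unfold Q. simpl. ring. }
  pose proof (contour_re_affine_bound x0 x1 y0 y1 xs ys c1 c2 _ _ _ ltac:(lra) ltac:(lra) HP HQ).
  pose proof (contour_im_affine_bound x0 x1 y0 y1 xs ys c1 c2 _ _ _ ltac:(lra) ltac:(lra) HP HQ).
  fold D in H, H0. unfold contour_size.
  replace (4 * eps * D ^ 2) with (2 * (eps * D) * D + 2 * (eps * D) * D) by ring. lra.
Qed.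


Definition big_quarter (r : rect) : rect :=
  epsilon (inhabits r)
    (fun q => exists i j, q = quarter r i j /\ contour_size q >= contour_size r / 4).

Lemma big_quarter_spec (r : rect) :
  exists i j, big_quarter r = quarter r i j /\ contour_size (big_quarter r) >= contour_size r / 4.
Proof.
  unfold big_quarter. apply (epsilon_spec (inhabits r)
    (fun q => exists i j, q = quarter r i j /\ contour_size q >= contour_size r / 4)).
  destruct (big_quarter_exists r) as [i [j H]]. exists (quarter r i j). eauto.
Qed.

Fixpoint nested (r0 : rect) (n : nat) : rect :=
  match n with O => r0 | S k => big_quarter (nested r0 k) end.

Lemma quarter_props (r : rect) (i j : bool) : rx0 r <= rx1 r -> ry0 r <= ry1 r ->
  rx0 r <= rx0 (quarter r i j) /\ rx1 (quarter r i j) <= rx1 r /\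
  ry0 r <= ry0 (quarter r i j) /\ ry1 (quarter r i j) <= ry1 r /\
  rx1 (quarter r i j) - rx0 (quarter r i j) = (rx1 r - rx0 r) / 2 /\
  ry1 (quarter r i j) - ry0 (quarter r i j) = (ry1 r - ry0 r) / 2.
Proof. intros. destruct i, j; simpl; repeat split; lra. Qed.

Section Nested.
Variable r0 : rect.
Hypotheses (hx : rx0 r0 <= rx1 r0) (hy : ry0 r0 <= ry1 r0).

Lemma nested_scaling (n : nat) :
  (rx1 (nested r0 n) - rx0 (nested r0 n)) * 2 ^ n = rx1 r0 - rx0 r0 /\
  (ry1 (nested r0 n) - ry0 (nested r0 n)) * 2 ^ n = ry1 r0 - ry0 r0 /\
  contour_size r0 <= contour_size (nested r0 n) * (2 ^ n * 2 ^ n).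
Proof.
  induction n as [|n [W1 [W2 W3]]]; simpl.
  - repeat split; try ring. lra.
  - assert (P2 : 0 < 2 ^ n) by (apply pow_lt; lra).
    assert (Hx : rx0 (nested r0 n) <= rx1 (nested r0 n)) by nra.
    assert (Hy : ry0 (nested r0 n) <= ry1 (nested r0 n)) by nra.
    destruct (big_quarter_spec (nested r0 n)) as [i [j [E N]]]. rewrite E in N |- *.
    destruct (quarter_props (nested r0 n) i j Hx Hy) as [_ [_ [_ [_ [Q1 Q2]]]]].
    pose proof (contour_size_ge0 (nested r0 n)).
    repeat split; [rewrite Q1, <- W1; field | rewrite Q2, <- W2; field | nra].
Qed.

Lemma nested_ordered (n : nat) :
  rx0 (nested r0 n) <= rx1 (nested r0 n) /\ ry0 (nested r0 n) <= ry1 (nested r0 n).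
Proof.
  destruct (nested_scaling n) as [W1 [W2 _]].
  assert (0 < 2 ^ n) by (apply pow_lt; lra). split; nra.
Qed.

Lemma nested_decreasing (n k : nat) :
  rx0 (nested r0 n) <= rx0 (nested r0 (n + k)) /\ rx1 (nested r0 (n + k)) <= rx1 (nested r0 n) /\
  ry0 (nested r0 n) <= ry0 (nested r0 (n + k)) /\ ry1 (nested r0 (n + k)) <= ry1 (nested r0 n).
Proof.
  induction k as [|k IH].
  - rewrite Nat.add_0_r. lra.
  - rewrite Nat.add_succ_r. simpl.
    destruct (nested_ordered (n + k)) as [Hx Hy].
    destruct (big_quarter_spec (nested r0 (n + k))) as [i [j [E _]]]. rewrite E.
    pose proof (quarter_props (nested r0 (n + k)) i j Hx Hy). lra.
Qed.

Lemma nested_lo_hi (m n : nat) :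
  rx0 (nested r0 m) <= rx1 (nested r0 n) /\ ry0 (nested r0 m) <= ry1 (nested r0 n).
Proof.
  destruct (Nat.le_ge_cases m n) as [H|H];
    destruct (Nat.le_exists_sub _ _ H) as [k [-> _]]; rewrite Nat.add_comm.
  - pose proof (nested_decreasing m k). pose proof (nested_ordered (m + k)). lra.
  - pose proof (nested_decreasing n k). pose proof (nested_ordered (n + k)). lra.
Qed.

Lemma nested_common_point : exists xs ys, forall n,
  rx0 (nested r0 n) <= xs <= rx1 (nested r0 n) /\ ry0 (nested r0 n) <= ys <= ry1 (nested r0 n).
Proof.
  destruct (completeness (fun x => exists n, x = rx0 (nested r0 n))) as [xs [Hub Hl]].
  { exists (rx1 r0). intros x [n ->]. apply (nested_lo_hi n 0). }
  { exists (rx0 r0). exists 0%nat. reflexivity. }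
  destruct (completeness (fun y => exists n, y = ry0 (nested r0 n))) as [ys [Hub' Hl']].
  { exists (ry1 r0). intros y [n ->]. apply (nested_lo_hi n 0). }
  { exists (ry0 r0). exists 0%nat. reflexivity. }
  exists xs, ys. intros n. repeat split.
  - apply Hub. eauto.
  - apply Hl. intros x [m ->]. apply (nested_lo_hi m n).
  - apply Hub'. eauto.
  - apply Hl'. intros y [m ->]. apply (nested_lo_hi m n).
Qed.

End Nested.

Theorem goursat (r0 : rect) : rx0 r0 <= rx1 r0 -> ry0 r0 <= ry1 r0 ->
  contour_re r0 = 0 /\ contour_im r0 = 0.
Proof.
  intros hx hy.
  destruct (nested_common_point r0 hx hy) as [xs [ys Hin]].
  destruct (HG (xs, ys)) as [c Hc].
  set (K := semi_perimeter r0).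
  assert (Hbound : forall eps, 0 < eps -> contour_size r0 <= 4 * eps * K ^ 2).
  { intros eps He. destruct (Hc eps He) as [del [Hdel Hd]].
    destruct (Pow_x_infinity 2 ltac:(rewrite Rabs_right; lra) (K / del + 1)) as [n Hn].
    specialize (Hn n (Nat.le_refl n)). rewrite Rabs_right in Hn by (left; apply pow_lt; lra).
    destruct (nested_scaling r0 hx hy n) as [W1 [W2 W3]].
    assert (P2 : 0 < 2 ^ n) by (apply pow_lt; lra).
    assert (Hk : semi_perimeter (nested r0 n) = K / 2 ^ n).
    { unfold K, semi_perimeter. rewrite <- W1, <- W2. field. lra. }
    assert (Hsmall : K / 2 ^ n < del).
    { apply (Rmult_lt_reg_r (2 ^ n)); auto. replace (K / 2 ^ n * 2 ^ n) with K by (field; lra).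
      replace K with (K / del * del) by (field; lra). nra. }
    pose proof (contour_size_local (nested r0 n) (xs, ys) c eps del ltac:(lra) Hd
                  (proj1 (Hin n)) (proj2 (Hin n)) ltac:(lra)) as HE.
    rewrite Hk in HE.
    replace (4 * eps * (K / 2 ^ n) ^ 2) with (4 * eps * K ^ 2 / (2 ^ n * 2 ^ n)) in HE by (field; lra).
    apply (Rmult_le_compat_r (2 ^ n * 2 ^ n)) in HE; [|nra].
    replace (4 * eps * K ^ 2 / (2 ^ n * 2 ^ n) * (2 ^ n * 2 ^ n)) with (4 * eps * K ^ 2) in HE
      by (field; lra). lra. }
  assert (Hzero : contour_size r0 <= 0).
  { destruct (Rle_or_lt (contour_size r0) 0) as [H|H]; auto.
    pose proof (pow2_ge_0 K).
    specialize (Hbound (contour_size r0 / (8 * K ^ 2 + 8)) ltac:(apply Rdiv_lt_0_compat; lra)).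
    replace (4 * (contour_size r0 / (8 * K ^ 2 + 8)) * K ^ 2)
      with (contour_size r0 * (4 * K ^ 2 / (8 * K ^ 2 + 8))) in Hbound by (field; lra).
    assert (4 * K ^ 2 / (8 * K ^ 2 + 8) < 1).
    { apply (Rmult_lt_reg_r (8 * K ^ 2 + 8)); [lra|].
      replace (4 * K ^ 2 / (8 * K ^ 2 + 8) * (8 * K ^ 2 + 8)) with (4 * K ^ 2) by (field; lra). lra. }
    nra. }
  unfold contour_size in Hzero.
  pose proof (Rabs_pos (contour_re r0)); pose proof (Rabs_pos (contour_im r0)).
  split; apply Rabs_eq_0; lra.
Qed.

End Goursat.

Lemma cos_near0 (v : R) : Rabs v <= 1/2 -> Rabs (cos v - 1) <= v * v.
Proof.
  intros Hv. apply Rabs_le_between in Hv. pose proof PI2_1.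
  destruct (cos_bound v 0 ltac:(lra) ltac:(lra)) as [L _].
  unfold cos_approx, cos_term in L. simpl in L.
  pose proof (COS_bound v).
  assert (1 - v * v / 2 <= cos v) by (eapply Rle_trans; [|exact L]; right; field).
  apply Rabs_le_between. split; nra.
Qed.

Lemma sin_near0_pos (v : R) : 0 <= v <= 1/2 -> Rabs (sin v - v) <= v * v.
Proof.
  intros Hv. pose proof PI2_1.
  destruct (sin_bound v 0 ltac:(lra) ltac:(lra)) as [L U].
  unfold sin_approx, sin_term in L, U. simpl in L, U.
  assert (v - v*v*v/6 <= sin v) by (eapply Rle_trans; [|exact L]; right; field).
  assert (sin v <= v - v*v*v/6 + v*v*v*v*v/120) by (eapply Rle_trans; [exact U|]; right; field).
  assert (v*v*v*v*v <= v * v * v)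
    by (assert (v * v <= 1) by nra; assert (0 <= v*v*v) by (apply Rmult_le_pos; [nra|lra]); nra).
  apply Rabs_le_between. split; nra.
Qed.

Lemma sin_near0 (v : R) : Rabs v <= 1/2 -> Rabs (sin v - v) <= v * v.
Proof.
  intros Hv. apply Rabs_le_between in Hv.
  destruct (Rle_or_lt 0 v).
  - apply sin_near0_pos; lra.
  - replace (sin v - v) with (- (sin (- v) - (- v))) by (rewrite sin_neg; ring).
    rewrite Rabs_Ropp. replace (v * v) with ((- v) * (- v)) by ring. apply sin_near0_pos; lra.
Qed.

Lemma exp_near0 (u : R) : Rabs u <= 1/2 -> Rabs (exp u - 1 - u) <= 2 * (u * u) /\ exp u <= 2.
Proof.
  intros Hu. apply Rabs_le_between in Hu.
  pose proof (exp_ineq1_le u). pose proof (exp_ineq1_le (- u)). pose proof (exp_pos u).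
  assert (exp u * exp (- u) = 1)
    by (rewrite <- exp_plus; replace (u + - u) with 0 by ring; apply exp_0).
  assert (exp u * (1 - u) <= 1) by nra.
  assert (1 <= (1 + u + 2 * (u * u)) * (1 - u)) by nra.
  assert (exp u <= 1 + u + 2 * (u * u)) by nra.
  split; [apply Rabs_le_between; split|]; nra.
Qed.

Lemma cos_lipschitz (a b : R) : Rabs (cos a - cos b) <= Rabs (a - b).
Proof.
  destruct (MVT_abs cos (fun x => - sin x) b a) as [c [-> _]].
  { intros; apply derivable_pt_lim_cos. }
  rewrite Rabs_Ropp. pose proof (SIN_bound c). pose proof (Rabs_pos (a - b)).
  assert (Rabs (sin c) <= 1) by (apply Rabs_le_between; lra). nra.
Qed.

Lemma sin_lipschitz (a b : R) : Rabs (sin a - sin b) <= Rabs (a - b).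
Proof.
  destruct (MVT_abs sin cos b a) as [c [-> _]].
  { intros; apply derivable_pt_lim_sin. }
  pose proof (COS_bound c). pose proof (Rabs_pos (a - b)).
  assert (Rabs (cos c) <= 1) by (apply Rabs_le_between; lra). nra.
Qed.

Definition Cexp (w : C) : C := (exp (fst w) * cos (snd w), exp (fst w) * sin (snd w)).

Lemma Cexp_add (w h : C) : Cexp (w + h)%C = (Cexp w * Cexp h)%C.
Proof.
  destruct w as [a b]; destruct h as [u v]. unfold Cexp; simpl.
  rewrite exp_plus, cos_plus, sin_plus. apply injective_projections; simpl; ring.
Qed.

Lemma Rabs_sqr_eq (u : R) : u * u = Rabs u * Rabs u.
Proof. rewrite <- Rabs_mult, Rabs_right; nra. Qed.

Lemma Cexp_near0 (h : C) : Cmod h <= 1/2 -> Cmod (Cexp h - 1 - h)%C <= 5 * (Cmod h * Cmod h).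
Proof.
  intros Hh. destruct h as [u v].
  pose proof (Rabs_fst_le_Cmod (u, v)); pose proof (Rabs_snd_le_Cmod (u, v)). simpl in *.
  rewrite Cmod_sqr; simpl.
  destruct (exp_near0 u ltac:(lra)) as [E1 E2].
  pose proof (cos_near0 v ltac:(lra)). pose proof (sin_near0 v ltac:(lra)). pose proof (exp_pos u).
  pose proof (Rabs_sqr_eq u). pose proof (Rabs_sqr_eq v).
  pose proof (Rabs_pos u); pose proof (Rabs_pos v).
  assert (Heu : Rabs (exp u - 1) <= 2 * Rabs u).
  { replace (exp u - 1) with ((exp u - 1 - u) + u) by ring.
    eapply Rle_trans; [apply Rabs_triang|]. nra. }
  assert (Hsv : Rabs (sin v) <= 2 * Rabs v).
  { replace (sin v) with ((sin v - v) + v) by ring.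
    eapply Rle_trans; [apply Rabs_triang|]. nra. }
  assert (R1 : Rabs (exp u * cos v + Ropp 1 + - u) <= 2 * (v * v) + 2 * (u * u)).
  { replace (exp u * cos v + Ropp 1 + - u) with (exp u * (cos v - 1) + (exp u - 1 - u)) by ring.
    eapply Rle_trans; [apply Rabs_triang|]. rewrite Rabs_mult, (Rabs_right (exp u)) by lra.
    pose proof (Rabs_pos (cos v - 1)). nra. }
  assert (R2 : Rabs (exp u * sin v + - 0 + - v) <= 2 * (u * u) + 3 * (v * v)).
  { replace (exp u * sin v + - 0 + - v) with ((exp u - 1) * sin v + (sin v - v)) by ring.
    eapply Rle_trans; [apply Rabs_triang|]. rewrite Rabs_mult.
    pose proof (Rabs_pos (exp u - 1)); pose proof (Rabs_pos (sin v)).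
    assert (Rabs (exp u - 1) * Rabs (sin v) <= (2 * Rabs u) * (2 * Rabs v))
      by (apply Rmult_le_compat; auto).
    pose proof (pow2_ge_0 (Rabs u - Rabs v)). nra. }
  unfold Cexp; simpl. eapply Rle_trans; [apply Cmod_le_abs|]. simpl. nra.
Qed.

Lemma Cexp_derivable (z0 w : C) : C_derivable_at (fun z => (z0 + Cexp z)%C) w (Cexp w).
Proof.
  intros eps He. set (M := Cmod (Cexp w)). pose proof (Cmod_ge_0 (Cexp w)).
  exists (Rmin (1/2) (eps / (5 * M + 1))). split.
  { apply Rmin_glb_lt; [lra|]. apply Rdiv_lt_0_compat; unfold M; lra. }
  intros h Hh. pose proof (Rmin_l (1/2) (eps / (5 * M + 1))).
  pose proof (Rmin_r (1/2) (eps / (5 * M + 1))).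
  replace (z0 + Cexp (w + h) - (z0 + Cexp w) - Cexp w * h)%C with (Cexp w * (Cexp h - 1 - h))%C
    by (rewrite Cexp_add; apply injective_projections; simpl; ring).
  rewrite Cmod_mult. fold M.
  pose proof (Cexp_near0 h ltac:(lra)). pose proof (Cmod_ge_0 h).
  assert (Hl : Cmod h * (5 * M + 1) <= eps).
  { assert (Hle : Cmod h <= eps / (5 * M + 1)) by lra.
    apply (Rmult_le_compat_r (5 * M + 1)) in Hle; [|unfold M; lra].
    replace (eps / (5 * M + 1) * (5 * M + 1)) with eps in Hle by (field; unfold M; lra). lra. }
  apply Rle_trans with (M * (5 * (Cmod h * Cmod h))); [apply Rmult_le_compat_l; auto|].
  unfold M in *. nra.
Qed.

Lemma C_derivable_comp (f g : C -> C) (w a b : C) :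
  C_derivable_at f w a -> C_derivable_at g (f w) b ->
  C_derivable_at (fun z => g (f z)) w (b * a)%C.
Proof.
  intros Hf Hg eps He.
  set (A := Cmod a). set (B := Cmod b). pose proof (Cmod_ge_0 a). pose proof (Cmod_ge_0 b).
  fold A in H; fold B in H0.
  destruct (Hg (eps / (2 * (A + 1)))) as [d2 [Hd2 G2]]; [apply Rdiv_lt_0_compat; lra|].
  set (e1 := Rmin 1 (eps / (2 * (B + 1)))).
  assert (He1 : 0 < e1) by (apply Rmin_glb_lt; [lra|]; apply Rdiv_lt_0_compat; lra).
  destruct (Hf e1 He1) as [d1 [Hd1 G1]].
  exists (Rmin d1 (d2 / (A + 1))). split; [apply Rmin_glb_lt; auto; apply Rdiv_lt_0_compat; lra|].
  intros h Hh. pose proof (Rmin_l d1 (d2 / (A + 1))); pose proof (Rmin_r d1 (d2 / (A + 1))).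
  pose proof (Rmin_l 1 (eps / (2 * (B + 1)))); pose proof (Rmin_r 1 (eps / (2 * (B + 1)))).
  fold e1 in H3, H4. pose proof (Cmod_ge_0 h).
  specialize (G1 h ltac:(lra)).
  set (k := (f (w + h) - f w)%C).
  assert (Hk : Cmod k <= (A + 1) * Cmod h).
  { replace k with ((f (w + h) - f w - a * h) + a * h)%C
      by (unfold k; apply injective_projections; simpl; ring).
    eapply Rle_trans; [apply Cmod_triangle|]. rewrite Cmod_mult. fold A. nra. }
  assert (Hk2 : Cmod k < d2).
  { assert (Hq : Cmod h < d2 / (A + 1)) by lra.
    apply (Rmult_lt_compat_r (A + 1)) in Hq; [|lra].
    replace (d2 / (A + 1) * (A + 1)) with d2 in Hq by (field; lra). nra. }
  specialize (G2 k Hk2).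
  replace (f w + k)%C with (f (w + h)%C) in G2 by (unfold k; apply injective_projections; simpl; ring).
  replace (g (f (w + h)) - g (f w) - b * a * h)%C with
    ((g (f (w + h)) - g (f w) - b * k) + b * (f (w + h) - f w - a * h))%C
    by (unfold k; apply injective_projections; simpl; ring).
  eapply Rle_trans; [apply Cmod_triangle|]. rewrite Cmod_mult. fold B.
  assert (X1 : eps / (2 * (A + 1)) * Cmod k <= eps / 2 * Cmod h).
  { apply Rle_trans with (eps / (2 * (A + 1)) * ((A + 1) * Cmod h)).
    - apply Rmult_le_compat_l; auto. left; apply Rdiv_lt_0_compat; lra.
    - right; field; lra. }
  assert (X2 : B * Cmod (f (w + h) - f w - a * h)%C <= eps / 2 * Cmod h).
  { apply Rle_trans with (B * (eps / (2 * (B + 1)) * Cmod h)).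
    - apply Rmult_le_compat_l; auto. eapply Rle_trans; [exact G1|]. apply Rmult_le_compat_r; auto.
    - replace (B * (eps / (2 * (B + 1)) * Cmod h)) with (B / (B + 1) * (eps / 2 * Cmod h))
        by (field; lra).
      assert (B / (B + 1) <= 1).
      { apply (Rmult_le_reg_r (B + 1)); [lra|].
        replace (B / (B + 1) * (B + 1)) with B by (field; lra). lra. }
      assert (0 <= eps / 2 * Cmod h) by nra. nra. }
  lra.
Qed.

Lemma entire_exp_shift (F : C -> C) (z0 : C) : entire F -> entire (fun w => F (z0 + Cexp w)%C).
Proof.
  intros HF w. destruct (HF (z0 + Cexp w)%C) as [c Hc].
  exists (c * Cexp w)%C. apply (C_derivable_comp (fun z => (z0 + Cexp z)%C) F w (Cexp w) c).
  - apply Cexp_derivable.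
  - exact Hc.
Qed.

Definition pol (r t : R) : C := (r * cos t, r * sin t).

Lemma Cmod_pol (r t : R) : 0 <= r -> Cmod (pol r t) = r.
Proof.
  intros Hr. unfold Cmod, pol; simpl. pose proof (sin2_cos2 t) as E. unfold Rsqr in E.
  replace (r * cos t * (r * cos t * 1) + r * sin t * (r * sin t * 1)) with (r * r) by nra.
  apply sqrt_square; auto.
Qed.

Lemma pol_lipschitz (r t r' t' : R) :
  Cmod (pol r' t' - pol r t)%C <= 2 * Rabs (r' - r) + 2 * Rabs r * Rabs (t' - t).
Proof.
  unfold pol. eapply Rle_trans; [apply Cmod_le_abs|]. simpl.
  replace (r' * cos t' + - (r * cos t)) with ((r' - r) * cos t' + r * (cos t' - cos t)) by ring.
  replace (r' * sin t' + - (r * sin t)) with ((r' - r) * sin t' + r * (sin t' - sin t)) by ring.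
  pose proof (Rabs_triang ((r' - r) * cos t') (r * (cos t' - cos t))).
  pose proof (Rabs_triang ((r' - r) * sin t') (r * (sin t' - sin t))).
  rewrite !Rabs_mult in *.
  pose proof (cos_lipschitz t' t). pose proof (sin_lipschitz t' t).
  assert (Rabs (cos t') <= 1) by (apply Rabs_le_between; apply COS_bound).
  assert (Rabs (sin t') <= 1) by (apply Rabs_le_between; apply SIN_bound).
  pose proof (Rabs_pos (r' - r)). pose proof (Rabs_pos r).
  pose proof (Rabs_pos (cos t')). pose proof (Rabs_pos (sin t')).
  assert (Rabs (r' - r) * Rabs (cos t') <= Rabs (r' - r)) by nra.
  assert (Rabs (r' - r) * Rabs (sin t') <= Rabs (r' - r)) by nra.
  assert (Rabs r * Rabs (cos t' - cos t) <= Rabs r * Rabs (t' - t)) by (apply Rmult_le_compat_l; auto).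
  assert (Rabs r * Rabs (sin t' - sin t) <= Rabs r * Rabs (t' - t)) by (apply Rmult_le_compat_l; auto).
  lra.
Qed.

Definition circle_re (F : C -> C) (z0 : C) (r t : R) : R := fst (F (z0 + pol r t)%C).

Lemma circle_re_integrable (F : C -> C) (z0 : C) (r a b : R) :
  entire F -> ex_RInt (circle_re F z0 r) a b.
Proof.
  intros HF. apply Rcontinuous_ex_RInt.
  apply (Rcontinuous_along F fst (fun t => (z0 + pol r t)%C) (2 * Rabs r)).
  - apply entire_continuous, HF.
  - apply fst_lipschitz.
  - pose proof (Rabs_pos r); lra.
  - intros t t'. replace ((z0 + pol r t') - (z0 + pol r t))%C with (pol r t' - pol r t)%C
      by (apply injective_projections; simpl; ring).
    eapply Rle_trans; [apply pol_lipschitz|]. rewrite Rminus_diag, Rabs_R0. lra.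
Qed.

(* The circle integral of Re F does not depend on the radius: it is the
   imaginary part of the contour integral of w |-> F(z0 + e^w) around the
   rectangle [ln r1, ln r2] x [0, 2 pi], whose horizontal sides cancel by
   2 pi-periodicity. *)
Lemma circle_integral_radius_le (F : C -> C) (z0 : C) (r1 r2 : R) :
  entire F -> 0 < r1 -> r1 <= r2 ->
  RInt (circle_re F z0 r1) 0 (2 * PI) = RInt (circle_re F z0 r2) 0 (2 * PI).
Proof.
  intros HF H1 H12.
  set (G := fun w => F (z0 + Cexp w)%C).
  assert (Hln : ln r1 <= ln r2).
  { destruct (Req_dec r1 r2) as [<-|E]; [lra|]. left; apply ln_increasing; lra. }
  pose proof PI_RGT_0.
  destruct (goursat G (entire_exp_shift F z0 HF) (mkRect (ln r1) (ln r2) 0 (2 * PI)) Hln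
              ltac:(simpl; lra)) as [_ E2].
  unfold contour_im in E2; simpl in E2.
  rewrite (RInt_ext (fun x => snd (G (x, 0)) - snd (G (x, 2 * PI))) (fun _ => 0)) in E2.
  2:{ intros x _. unfold G, Cexp; simpl. rewrite cos_2PI, sin_2PI, cos_0, sin_0. ring. }
  rewrite RInt_constR in E2.
  assert (Ec : forall r, 0 < r -> forall y, fst (G (ln r, y)) = circle_re F z0 r y).
  { intros r Hr y. unfold G, circle_re, Cexp, pol; simpl. rewrite exp_ln; auto. }
  rewrite (RInt_ext (fun y => fst (G (ln r2, y)) - fst (G (ln r1, y)))
                    (fun y => circle_re F z0 r2 y - circle_re F z0 r1 y)) in E2.
  2:{ intros y _. rewrite !Ec by lra. reflexivity. }
  rewrite RInt_minusR in E2 by (apply circle_re_integrable; auto). lra.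
Qed.

Lemma circle_integral_radius (F : C -> C) (z0 : C) (r1 r2 : R) :
  entire F -> 0 < r1 -> 0 < r2 ->
  RInt (circle_re F z0 r1) 0 (2 * PI) = RInt (circle_re F z0 r2) 0 (2 * PI).
Proof.
  intros HF H1 H2. destruct (Rle_or_lt r1 r2).
  - apply circle_integral_radius_le; auto.
  - symmetry. apply circle_integral_radius_le; auto; lra.
Qed.

(* Mean value property: the average of Re F over any circle is Re F at the
   centre (shrink the radius and use continuity). *)
Theorem mean_value (F : C -> C) (z0 : C) (r : R) : entire F -> 0 < r ->
  RInt (circle_re F z0 r) 0 (2 * PI) = 2 * PI * fst (F z0).
Proof.
  intros HF Hr. pose proof PI_RGT_0.
  set (X := RInt (circle_re F z0 r) 0 (2 * PI) - 2 * PI * fst (F z0)).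
  assert (Hb : forall eps, 0 < eps -> Rabs X <= 2 * PI * eps).
  { intros eps He. destruct (entire_continuous F HF z0 eps He) as [d [Hd Hc]].
    unfold X. rewrite (circle_integral_radius F z0 r (d / 2)) by (auto; lra).
    replace (2 * PI * fst (F z0)) with ((2 * PI - 0) * fst (F z0)) by ring.
    replace (2 * PI * eps) with ((2 * PI - 0) * eps) by ring.
    apply RInt_approx; [lra | apply circle_re_integrable; auto|].
    intros t _. unfold circle_re. left.
    eapply Rle_lt_trans; [apply fst_lipschitz|]. apply Hc.
    replace (z0 + pol (d / 2) t - z0)%C with (pol (d / 2) t)
      by (apply injective_projections; simpl; ring).
    rewrite Cmod_pol; lra. }
  assert (X = 0).
  { apply Rabs_eq_0. destruct (Rle_or_lt (Rabs X) 0) as [H0|H0].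
    - pose proof (Rabs_pos X); lra.
    - specialize (Hb (Rabs X / (4 * PI)) ltac:(apply Rdiv_lt_0_compat; lra)).
      replace (2 * PI * (Rabs X / (4 * PI))) with (Rabs X / 2) in Hb by (field; lra). lra. }
  unfold X in H0. lra.
Qed.

Module CompactMax.
Import all_boot all_order all_algebra all_classical all_reals all_analysis.
Import Rstruct Rstruct_topology.
Import Order.TTheory GRing.Theory Num.Theory.
Local Open Scope classical_set_scope.

Lemma max_on_rectangle (f : R -> R -> R) (a b c d : R) : (a <= b)%coqR -> (c <= d)%coqR ->
  (forall x y eps, (0 < eps)%coqR -> exists del, (0 < del)%coqR /\ forall x' y',
    (Rabs (x' - x) < del)%coqR -> (Rabs (y' - y) < del)%coqR ->
    (Rabs (f x' y' - f x y) < eps)%coqR) ->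
  exists x0 y0, (a <= x0 <= b)%coqR /\ (c <= y0 <= d)%coqR /\
    forall x y, (a <= x <= b)%coqR -> (c <= y <= d)%coqR -> (f x y <= f x0 y0)%coqR.
Proof.
move=> ab cd fc.
pose g := fun p : R * R => f p.1 p.2.
pose A := `[a, b]%classic `*` `[c, d]%classic.
have A0 : A !=set0.
  exists (a, c); split => /=; rewrite in_itv /=; apply/andP; split; apply/RleP; lra.
have cA : compact A by apply: compact_setX; apply: segment_compact.
have gc : continuous g.
  move=> [x y]; apply/(@cvgrPdist_lt _ R^o) => e /RltP e0.
  have [del [/RltP del0 H]] := fc x y e e0.
  exists (ball x del, ball y del) => /=.
    by split; apply: nbhsx_ballx; exact: del0.
  move=> [x' y'] [/= bx byy].
  move: bx byy; rewrite /ball /= => /RltP bx /RltP byy.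
  rewrite /g /= -RabsE; rewrite Rabs_minus_sym; apply/RltP; apply: H.
  by rewrite Rabs_minus_sym RabsE.
  by rewrite Rabs_minus_sym RabsE.
have [[x0 y0] /set_mem [/= Hx Hy] Hm] := compact_EVT_max A0 cA (continuous_subspaceT gc).
move: Hx Hy; rewrite !in_itv /= => /andP[/RleP ? /RleP ?] /andP[/RleP ? /RleP ?].
exists x0, y0; split; [lra|split; [lra|]].
move=> x y Hx Hy; apply/RleP; apply: (Hm (x, y)); apply/mem_set; split => /=;
  rewrite in_itv /=; apply/andP; split; apply/RleP; lra.
Qed.
End CompactMax.

Lemma polar_coordinates (z : C) : exists t, 0 <= t <= 2 * PI /\ z = pol (Cmod z) t.
Proof.
  destruct z as [u v]. pose proof (Cmod_sqr (u, v)) as Hs. simpl in Hs.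
  set (r := Cmod (u, v)) in *. pose proof (Cmod_ge_0 (u, v)). fold r in H.
  pose proof PI_RGT_0.
  destruct (Req_dec r 0) as [E|E].
  { exists 0. split; [lra|]. rewrite E in Hs |- *. unfold pol. apply injective_projections; simpl; nra. }
  set (x := u / r). set (y := v / r).
  assert (Hu : u = r * x) by (unfold x; field; lra).
  assert (Hv : v = r * y) by (unfold y; field; lra).
  assert (Hxy : x * x + y * y = 1).
  { apply (Rmult_eq_reg_l (r * r)); [|nra]. rewrite Hu, Hv in Hs. nra. }
  assert (Hx : -1 <= x <= 1) by nra.
  pose proof (acos_bound x).
  destruct (Rle_or_lt 0 v).
  - exists (acos x). split; [lra|].
    unfold pol. rewrite cos_acos, sin_acos by auto.
    assert (Hy : 0 <= y) by (unfold y; apply Rdiv_le_0_compat; lra).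
    replace (1 - x²) with (y * y) by (unfold Rsqr; lra). rewrite sqrt_square by auto.
    apply injective_projections; simpl; lra.
  - exists (2 * PI - acos x). split; [lra|].
    unfold pol. rewrite cos_minus, sin_minus, cos_2PI, sin_2PI, cos_acos, sin_acos by auto.
    assert (Hy : 0 < - y) by nra.
    replace (1 - x²) with ((- y) * (- y)) by (unfold Rsqr; lra). rewrite sqrt_square by lra.
    apply injective_projections; simpl; lra.
Qed.

Lemma perturbed_polar_continuous (F : C -> C) (eps : R) : entire F -> 0 <= eps ->
  forall r t e, 0 < e -> exists del, 0 < del /\ forall r' t',
    Rabs (r' - r) < del -> Rabs (t' - t) < del ->
    Rabs ((fst (F (pol r' t')) + eps * (r' * r')) - (fst (F (pol r t)) + eps * (r * r))) < e.
Proof.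
  intros HF He r t e Hee.
  destruct (entire_continuous F HF (pol r t) (e / 2)) as [d [Hd Hc]]; [lra|].
  pose proof (Rabs_pos r).
  set (K := 2 + 2 * Rabs r). set (L := eps * (2 * Rabs r + 1) + 1).
  assert (HL0 : 0 <= eps * (2 * Rabs r + 1)) by (apply Rmult_le_pos; lra).
  set (m := Rmin 1 (Rmin (d / (K + 1)) (e / (2 * L)))).
  assert (Hm1 : m <= 1) by apply Rmin_l.
  assert (Hm2 : m * (K + 1) <= d).
  { apply Rle_trans with (d / (K + 1) * (K + 1)); [|right; field; unfold K; lra].
    apply Rmult_le_compat_r; [unfold K; lra|].
    eapply Rle_trans; [apply Rmin_r|apply Rmin_l]. }
  assert (Hm3 : m * L <= e / 2).
  { apply Rle_trans with (e / (2 * L) * L); [|right; field; unfold L; lra].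
    apply Rmult_le_compat_r; [unfold L; lra|].
    eapply Rle_trans; [apply Rmin_r|apply Rmin_r]. }
  exists m. split.
  { unfold m; repeat apply Rmin_glb_lt; try lra; apply Rdiv_lt_0_compat; unfold K, L; lra. }
  intros r' t' Hr' Ht'.
  pose proof (Rabs_pos (r' - r)). pose proof (Rabs_pos (t' - t)).
  assert (C1 : Rabs (fst (F (pol r' t')) - fst (F (pol r t))) < e / 2).
  { eapply Rle_lt_trans; [apply fst_lipschitz|]. apply Hc.
    eapply Rle_lt_trans; [apply pol_lipschitz|].
    assert (Rabs r * Rabs (t' - t) <= Rabs r * m) by (apply Rmult_le_compat_l; lra).
    assert (m * (K + 1) = 2 * m + 2 * (Rabs r * m) + m) by (unfold K; ring).
    assert (0 < m) by lra. lra. }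
  assert (C2 : Rabs (eps * (r' * r') - eps * (r * r)) <= e / 2).
  { replace (eps * (r' * r') - eps * (r * r)) with (eps * ((r' - r) * (r' + r))) by ring.
    rewrite !Rabs_mult, (Rabs_right eps) by lra.
    assert (Rabs (r' + r) <= 2 * Rabs r + 1).
    { replace (r' + r) with ((r' - r) + 2 * r) by ring. eapply Rle_trans; [apply Rabs_triang|].
      rewrite Rabs_mult, (Rabs_right 2) by lra. lra. }
    pose proof (Rabs_pos (r' + r)).
    assert (Rabs (r' - r) * Rabs (r' + r) <= m * (2 * Rabs r + 1)) by (apply Rmult_le_compat; lra).
    apply Rle_trans with (eps * (m * (2 * Rabs r + 1))); [apply Rmult_le_compat_l; auto|].
    assert (m * L = m * (eps * (2 * Rabs r + 1)) + m) by (unfold L; ring). nra. }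
  replace (fst (F (pol r' t')) + eps * (r' * r') - (fst (F (pol r t)) + eps * (r * r))) with
    ((fst (F (pol r' t')) - fst (F (pol r t))) + (eps * (r' * r') - eps * (r * r))) by ring.
  eapply Rle_lt_trans; [apply Rabs_triang|]. lra.
Qed.

Lemma entire_mul_const (u : C) : entire (fun z => (u * z)%C).
Proof.
  intros w. exists u. intros eps He. exists 1. split; [lra|]. intros h _.
  replace (u * (w + h) - u * w - u * h)%C with (RtoC 0) by (apply injective_projections; simpl; ring).
  rewrite Cmod_0. pose proof (Cmod_ge_0 h). nra.
Qed.

(* |zs + s e^{it}|^2 = 2 Re(conj(zs) (zs + s e^{it})) - (|zs|^2 - s^2). *)
Lemma circle_sqr_identity (a b s t : R) :
  (a + s * cos t) * (a + s * cos t) + (b + s * sin t) * (b + s * sin t) =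
  2 * (a * (a + s * cos t) - - b * (b + s * sin t)) - (a * a + b * b - s * s).
Proof.
  pose proof (sin2_cos2 t) as E. unfold Rsqr in E.
  replace ((a + s * cos t) * (a + s * cos t) + (b + s * sin t) * (b + s * sin t))
    with (a * a + b * b + 2 * s * (a * cos t + b * sin t) + s * s * (sin t * sin t + cos t * cos t))
    by ring.
  rewrite E. ring.
Qed.

(* Along the circle of centre zs and radius s, Re F + eps |z|^2 is the real
   part of the entire function F + 2 eps conj(zs) z plus a constant. *)
Definition mul_conj (zs : C) (z : C) : C := ((fst zs, (- snd zs)%R) * z)%C.

Lemma perturbed_on_circle (F : C -> C) (zs : C) (s eps t : R) :
  fst (F (zs + pol s t)%C) + eps * (Cmod (zs + pol s t)%C * Cmod (zs + pol s t)%C) =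
  circle_re F zs s t + eps * (2 * circle_re (mul_conj zs) zs s t - (Cmod zs * Cmod zs - s * s)).
Proof.
  unfold circle_re, mul_conj. rewrite !Cmod_sqr. unfold pol. simpl.
  rewrite circle_sqr_identity. ring.
Qed.

Lemma perturbed_circle_integrable (F : C -> C) (zs : C) (s eps : R) : entire F ->
  ex_RInt (fun t => fst (F (zs + pol s t)%C) +
                    eps * (Cmod (zs + pol s t)%C * Cmod (zs + pol s t)%C)) 0 (2 * PI).
Proof.
  intros HF. apply (ex_RInt_ext (fun t => circle_re F zs s t +
    eps * (2 * circle_re (mul_conj zs) zs s t - (Cmod zs * Cmod zs - s * s)))).
  { intros t _. symmetry. apply perturbed_on_circle. }
  apply (ex_RInt_plus (V := R_CompleteNormedModule)); [apply circle_re_integrable, HF|].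
  apply (ex_RInt_scal (V := R_CompleteNormedModule)).
  apply (ex_RInt_minus (V := R_CompleteNormedModule)); [|apply ex_RInt_const].
  apply (ex_RInt_scal (V := R_CompleteNormedModule)).
  apply circle_re_integrable, entire_mul_const.
Qed.

Lemma perturbed_mean_value (F : C -> C) (zs : C) (s eps : R) : entire F -> 0 < s ->
  RInt (fun t => fst (F (zs + pol s t)%C) + eps * (Cmod (zs + pol s t)%C * Cmod (zs + pol s t)%C))
    0 (2 * PI) = 2 * PI * (fst (F zs) + eps * (Cmod zs * Cmod zs + s * s)).
Proof.
  intros HF Hs.
  set (K := Cmod zs * Cmod zs - s * s).
  rewrite (RInt_ext _ (fun t => circle_re F zs s t + eps * (2 * circle_re (mul_conj zs) zs s t - K))).
  2:{ intros t _. apply perturbed_on_circle. }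
  assert (HL : entire (mul_conj zs)) by apply entire_mul_const.
  assert (ExF := circle_re_integrable F zs s 0 (2 * PI) HF).
  assert (ExL := circle_re_integrable (mul_conj zs) zs s 0 (2 * PI) HL).
  assert (ExL2 : ex_RInt (fun t => 2 * circle_re (mul_conj zs) zs s t - K) 0 (2 * PI)).
  { apply (ex_RInt_minus (V := R_CompleteNormedModule)); [|apply ex_RInt_const].
    apply (ex_RInt_scal (V := R_CompleteNormedModule)). exact ExL. }
  rewrite RInt_plusR, RInt_scalR, RInt_minusR, RInt_scalR, RInt_constR;
    [| exact ExL | apply (ex_RInt_scal (V := R_CompleteNormedModule)); exact ExL
     | apply ex_RInt_const | exact ExL2 | exact ExF
     | apply (ex_RInt_scal (V := R_CompleteNormedModule)); exact ExL2].
  rewrite !mean_value by auto.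
  assert (HLz : fst (mul_conj zs zs) = Cmod zs * Cmod zs)
    by (rewrite Cmod_sqr; unfold mul_conj; simpl; ring).
  unfold K. rewrite HLz. match goal with |- ?a = ?b => change (@eq R a b) end. ring.
Qed.

(* Hence, for eps > 0, Re F + eps |z|^2 cannot attain its maximum over the
   closed unit disc at an interior point zs: the circle of radius
   (1 - |zs|)/2 around zs lies in the disc, and its mean is too large. *)
Lemma no_interior_max (F : C -> C) (eps : R) (zs : C) : entire F -> 0 < eps -> Cmod zs < 1 ->
  ~ (forall z, Cmod z <= 1 ->
       fst (F z) + eps * (Cmod z * Cmod z) <= fst (F zs) + eps * (Cmod zs * Cmod zs)).
Proof.
  intros HF He Hzs Hmax. pose proof PI_RGT_0. pose proof (Cmod_ge_0 zs).
  set (s := (1 - Cmod zs) / 2). assert (Hs : 0 < s) by (unfold s; lra).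
  assert (Hle := RInt_le _ (fun _ => fst (F zs) + eps * (Cmod zs * Cmod zs)) 0 (2 * PI)
                  ltac:(lra) (perturbed_circle_integrable F zs s eps HF) (ex_RInt_const _ _ _)).
  lapply Hle; [clear Hle; intros Hle|].
  2:{ intros t _. apply Hmax.
      eapply Rle_trans; [apply Cmod_triangle|]. rewrite Cmod_pol by lra. unfold s; lra. }
  rewrite perturbed_mean_value, RInt_constR in Hle by auto.
  assert (0 < 2 * PI * eps * (s * s)) by (apply Rmult_lt_0_compat; nra).
  nra.
Qed.

(* Maximum principle: if Re F <= m on the unit circle then Re F <= m on the
   closed unit disc.  Otherwise Re F + eps |z|^2 (for a small eps > 0) has a
   maximum over the disc, which is too large to lie on the circle and
   cannot lie inside by [no_interior_max]. *)
Theorem max_principle (F : C -> C) (m : R) : entire F ->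
  (forall t, 0 <= t <= 2 * PI -> fst (F (pol 1 t)) <= m) ->
  forall z, Cmod z <= 1 -> fst (F z) <= m.
Proof.
  intros HF Hm z0 Hz0. destruct (Rle_or_lt (fst (F z0)) m) as [Hle|Hgt]; auto. exfalso.
  pose proof PI_RGT_0. pose proof (Cmod_ge_0 z0).
  set (eps := (fst (F z0) - m) / 2).
  assert (He : 0 < eps) by (unfold eps; lra).
  set (f := fun r t => fst (F (pol r t)) + eps * (r * r)).
  destruct (CompactMax.max_on_rectangle f 0 1 0 (2 * PI) ltac:(lra) ltac:(lra))
    as [rs [ts [Hr [Ht Hmax]]]].
  { intros x y e Hee. apply perturbed_polar_continuous; auto; lra. }
  assert (Hdisc : forall z, Cmod z <= 1 -> fst (F z) + eps * (Cmod z * Cmod z) <= f rs ts).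
  { intros z Hz. destruct (polar_coordinates z) as [t [Ht0 Hzp]].
    pose proof (Cmod_ge_0 z). specialize (Hmax (Cmod z) t ltac:(lra) Ht0).
    unfold f in Hmax. rewrite <- Hzp in Hmax. exact Hmax. }
  assert (Hzs : Cmod (pol rs ts) = rs) by (apply Cmod_pol; lra).
  destruct (Rle_or_lt 1 rs) as [E1|E1].
  - replace rs with 1 in * by lra.
    pose proof (Hdisc z0 Hz0). pose proof (Hm ts Ht). unfold f in *.
    assert (0 <= eps * (Cmod z0 * Cmod z0)) by (apply Rmult_le_pos; nra).
    unfold eps in *. lra.
  - apply (no_interior_max F eps (pol rs ts) HF He ltac:(lra)).
    rewrite Hzs. exact Hdisc.
Qed.

Corollary max_on_unit_circle (F : C -> C) (z : C) : entire F -> Cmod z <= 1 ->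
  exists t, fst (F z) <= fst (F (pol 1 t)).
Proof.
  intros HF Hz. pose proof PI_RGT_0.
  assert (Hc : Rcontinuous (fun t => fst (F (pol 1 t)))).
  { apply (Rcontinuous_along F fst (pol 1) 2); [apply entire_continuous, HF|apply fst_lipschitz|lra|].
    intros t t'. eapply Rle_trans; [apply pol_lipschitz|].
    rewrite Rminus_diag, Rabs_R0, Rabs_R1. lra. }
  destruct (continuity_ab_maj (fun t => fst (F (pol 1 t))) 0 (2 * PI) ltac:(lra)
              (fun c _ => Rcontinuous_pt _ c Hc)) as [tm [Htm _]].
  exists tm. apply (max_principle F); auto.
Qed.

(* The complex line C x {0} inside C^2, and the Hermitian product
   <E, a> = sum_k E_k conj(a_k), complex-linear in E. *)
Definition emb (z : C) : C2 := mkC2 (fst z) (snd z) 0 0.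

Definition dot (x y : C2) : R := a1 x * a1 y + b1 x * b1 y + a2 x * a2 y + b2 x * b2 y.

Definition herm (E a : C2) : C := (dot E a, dot E (mulI a)).

(* Cauchy-Schwarz for the Hermitian product (via Lagrange's identity). *)
Lemma herm_cauchy_schwarz (E a : C2) : Cmod (herm E a) <= normC2 E * normC2 a.
Proof.
  destruct E as [e1 e2 e3 e4]; destruct a as [x1 x2 x3 x4].
  unfold herm, Cmod, normC2, dot, mulI; simpl.
  rewrite <- sqrt_mult by nra. apply sqrt_le_1_alt.
  match goal with |- ?A <= ?B => assert (B - A = (e1 * x3 - e2 * x4 - e3 * x1 + e4 * x2) ^ 2 +
                                    (e1 * x4 + e2 * x3 - e3 * x2 - e4 * x1) ^ 2) by ring end.
  pose proof (pow2_ge_0 (e1 * x3 - e2 * x4 - e3 * x1 + e4 * x2)).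
  pose proof (pow2_ge_0 (e1 * x4 + e2 * x3 - e3 * x2 - e4 * x1)).
  lra.
Qed.

Lemma herm_self (a : C2) : fst (herm a a) = normC2 a * normC2 a.
Proof.
  unfold herm, normC2, dot; simpl. rewrite sqrt_sqrt; [ring|].
  destruct a; simpl; nra.
Qed.

Lemma normC2_nonneg (z : C2) : 0 <= normC2 z.
Proof. apply sqrt_pos. Qed.

Lemma normC2_emb (h : C) : normC2 (emb h) = Cmod h.
Proof. unfold normC2, emb, Cmod; simpl. f_equal. ring. Qed.

Definition slice (psi : C2 -> C2) (c a : C2) (w : C) : C := herm (subC2 (psi (emb w)) c) a.

Definition e0 : C2 := mkC2 1 0 0 0.

(* The first-order remainder of [slice] is the Hermitian product of the
   first-order remainder of psi with a, because L is complex-linear. *)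
Lemma slice_remainder (psi L : C2 -> C2) (c a : C2) (w h : C) : C_linear L ->
  (slice psi c a (w + h) - slice psi c a w - herm (L e0) a * h)%C =
  herm (subC2 (subC2 (psi (addC2 (emb w) (emb h))) (psi (emb w))) (L (emb h))) a.
Proof.
  intros [Ladd [Lsc Lmul]].
  assert (HL : L (emb h) = addC2 (scaleC2 (fst h) (L e0)) (scaleC2 (snd h) (mulI (L e0)))).
  { replace (emb h) with (addC2 (scaleC2 (fst h) e0) (scaleC2 (snd h) (mulI e0)))
      by (unfold emb, addC2, scaleC2, mulI, e0; simpl; f_equal; ring).
    rewrite Ladd, !Lsc, Lmul. reflexivity. }
  unfold slice.
  replace (emb (w + h)%C) with (addC2 (emb w) (emb h))
    by (unfold emb, addC2; simpl; f_equal; ring).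
  rewrite HL.
  destruct (psi (addC2 (emb w) (emb h))) as [p1 p2 p3 p4].
  destruct (psi (emb w)) as [q1 q2 q3 q4]. destruct (L e0) as [l1 l2 l3 l4].
  destruct c as [c1 c2 c3 c4]. destruct a as [v1 v2 v3 v4]. destruct h as [h1 h2].
  unfold herm, dot, subC2, addC2, scaleC2, mulI; simpl.
  apply injective_projections; simpl; ring.
Qed.

Lemma slice_entire (psi : C2 -> C2) (c a : C2) : holomorphic psi -> entire (slice psi c a).
Proof.
  intros Hh w. destruct (Hh (emb w)) as [L [HL Hfr]].
  exists (herm (L e0) a). intros eps He. pose proof (normC2_nonneg a).
  destruct (Hfr (eps / (normC2 a + 1))) as [d [Hd Hf]]; [apply Rdiv_lt_0_compat; lra|].
  exists d. split; auto. intros h Hh0. pose proof (Cmod_ge_0 h).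
  destruct (Req_dec (Cmod h) 0) as [Z|NZ].
  { apply Cmod_eq_0 in Z. subst h. rewrite Cplus_0_r, Cmult_0_r.
    replace (slice psi c a w - slice psi c a w - 0)%C with (RtoC 0)
      by (apply injective_projections; simpl; ring).
    rewrite Cmod_0. lra. }
  rewrite slice_remainder by exact HL.
  eapply Rle_trans; [apply herm_cauchy_schwarz|].
  specialize (Hf (emb h) ltac:(rewrite normC2_emb; lra)). rewrite normC2_emb in Hf.
  apply Rle_trans with (eps / (normC2 a + 1) * Cmod h * normC2 a).
  { apply Rmult_le_compat_r; auto. }
  replace (eps / (normC2 a + 1) * Cmod h * normC2 a)
    with (normC2 a / (normC2 a + 1) * (eps * Cmod h)) by (field; lra).
  assert (normC2 a / (normC2 a + 1) <= 1).
  { apply (Rmult_le_reg_r (normC2 a + 1)); [lra|].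
    replace (normC2 a / (normC2 a + 1) * (normC2 a + 1)) with (normC2 a) by (field; lra). lra. }
  assert (0 <= eps * Cmod h) by nra. nra.
Qed.

Theorem disc_in_ball (psi : C2 -> C2) (c : C2) (Rad : R) (z : C) :
  holomorphic psi -> 0 < Rad -> (forall t, distC2 (psi (emb (pol 1 t))) c < Rad) ->
  Cmod z <= 1 -> distC2 (psi (emb z)) c < Rad.
Proof.
  intros Hh HR Hcirc Hz. destruct (Rlt_or_le (distC2 (psi (emb z)) c) Rad) as [|Hfar]; auto.
  exfalso. set (a := subC2 (psi (emb z)) c).
  assert (Ha : Rad <= normC2 a) by exact Hfar.
  destruct (max_on_unit_circle (slice psi c a) z (slice_entire psi c a Hh) Hz) as [t Ht].
  unfold slice in Ht. fold a in Ht. rewrite herm_self in Ht.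
  assert (Hre : fst (herm (subC2 (psi (emb (pol 1 t))) c) a) < Rad * normC2 a).
  { eapply Rle_lt_trans; [apply Rle_abs|]. eapply Rle_lt_trans; [apply Rabs_fst_le_Cmod|].
    eapply Rle_lt_trans; [apply herm_cauchy_schwarz|].
    apply Rmult_lt_compat_r; [lra|apply Hcirc]. }
  nra.
Qed.

Lemma circle_in_tube (t : R) : tubeU (emb (pol 1 t)).
Proof.
  exists (mkC2 (cos t) (sin t) 0 0). split; [exists t; reflexivity|].
  unfold distC2, normC2, subC2, emb, pol; simpl.
  rewrite !Rmult_1_l, !Rminus_diag, !Rmult_0_l, !Rplus_0_r, sqrt_0. lra.
Qed.

Lemma pointP_in_disc : pointP = emb (9/10, 0) /\ Cmod (9/10, 0) <= 1.
Proof.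
  split; [reflexivity|].
  eapply Rle_trans; [apply Cmod_le_abs|]. rewrite Rabs_R0, Rabs_right by lra. lra.
Qed.

(* psi(p) is in the open ball containing psi(U), so it is not on its sphere. *)
Theorem mainTheorem6 :
  forall psi : C2 -> C2, is_aut psi ->
    ~ spherically_extreme (image psi tubeU) (psi pointP).
Proof.
  intros psi [Hh _] [_ [_ [c [Rad [HR [Hin Hd]]]]]].
  assert (Hcirc : forall t, distC2 (psi (emb (pol 1 t))) c < Rad).
  { intros t. apply Hin. exists (emb (pol 1 t)). split; [apply circle_in_tube|reflexivity]. }
  destruct pointP_in_disc as [Hp Hdisc].
  pose proof (disc_in_ball psi c Rad (9/10, 0) Hh HR Hcirc Hdisc) as Hlt.
  rewrite <- Hp in Hlt. lra.
Qed.
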